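(* Let $\Gamma = a : (\mathsf{Ref}~B)^{\diamond},\ b : (\mathsf{Ref}~B)^{\diamond},\ c : (\mathsf{Ref}~B)^{a,b}$, which is a well-formed context. Both $b$ and $c$ are valid qualifier differences between $c$ and $a$, i.e. each is a minimal qualifier $q$ with $\Gamma \vdash c <: a, q$. Moreover neither $\Gamma \vdash b <: c$ nor $\Gamma \vdash c <: b$ holds, so the two solutions are incomparable and no principal qualifier difference exists.
   Context: Setting: the reachability type system $\mathsf{G}^{\diamond}_{<:}$. Qualifiers are finite sets of variables possibly containing the freshness marker $\diamond$ (a fresh, unnamed location) and qualifier holes $\square$; $p,q$ denotes union. A context entry $x : T^{q}$ records the reachability qualifier $q$ of $x$. Subqualifying $\Gamma \vdash p <: q$ is generated by: transitivity; congruence ($p<:q$ and $r<:s$ give $p,r <: q,s$); subset inclusion ($p\subseteq q$ gives $p<:q$); variable expansion ($x : T^{q}\in\Gamma$ with $\diamond\notin q$ and $\square\notin q$ gives $x <: q$, and similarly for type-variable bounds); and self-reference packing ($f : F^{q}\in\Gamma$ gives $q\setminus\{\diamond,\square\} <: f$). $B$ is the base type and $\mathsf{Ref}$ the reference type. *)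

From Stdlib Require Import List.
Import ListNotations.

(* Names of term and type variables (a single namespace). *)
Definition name := nat.

Inductive atom : Type :=
| AVar : name -> atom
| ADiamond : atom
| AHole : atom.

(* A qualifier is a finite set of atoms, represented as a list;
   set membership is List.In and sets are compared by inclusion. *)
Definition qual := list atom.

Definition qunion (p q : qual) : qual := p ++ q.
Definition qvar (x : name) : qual := [AVar x].
Definition qsubset (p q : qual) : Prop := forall t, In t p -> In t q.

Definition is_marker (t : atom) : bool :=
  match t with ADiamond | AHole => true | AVar _ => false end.

Definition qstrip (q : qual) : qual := filter (fun t => negb (is_marker t)) q.

Inductive ty : Type :=
| TTop : ty
| TBase : ty
| TRef : ty -> ty
| TVar : name -> ty
| TFun : name -> name -> ty -> qual -> ty -> qual -> ty
    (* f(x : T1^q1) -> T2^q2, with self-name f *)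
| TAll : name -> name -> ty -> qual -> ty -> qual -> ty.
    (* f[X <: T1^q1] -> T2^q2, with self-name f *)

(* Self-referential (function) types: those admitting self-reference packing. *)
Definition is_fun_ty (T : ty) : Prop :=
  match T with TFun _ _ _ _ _ _ | TAll _ _ _ _ _ _ => True | _ => False end.

Inductive entry : Type :=
| CVar : name -> ty -> qual -> entry
| CTVar : name -> ty -> qual -> entry.

Definition ctx := list entry.

Inductive subq (G : ctx) : qual -> qual -> Prop :=
| sq_trans : forall p q r, subq G p q -> subq G q r -> subq G p r
| sq_cong : forall p q r s, subq G p q -> subq G r s ->
    subq G (qunion p r) (qunion q s)
| sq_sub : forall p q, qsubset p q -> subq G p q
| sq_var : forall x T q, In (CVar x T q) G ->
    ~ In ADiamond q -> ~ In AHole q -> subq G (qvar x) q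
| sq_tvar : forall X T q, In (CTVar X T q) G ->
    ~ In ADiamond q -> ~ In AHole q -> subq G (qvar X) q
| sq_self : forall f F q, In (CVar f F q) G -> is_fun_ty F ->
    subq G (qstrip q) (qvar f).

Definition qual_diff (G : ctx) (p r q : qual) : Prop :=
  subq G p (qunion r q) /\
  forall q', subq G p (qunion r q') -> subq G q' q -> subq G q q'.

Definition principal_qual_diff (G : ctx) (p r q : qual) : Prop :=
  qual_diff G p r q /\ forall q', qual_diff G p r q' -> subq G q q'.

From Stdlib Require Import List.
Import ListNotations.

(* Read a qualifier [q] as the proposition "q meets P" for a set of atoms [P].
   Subqualifying is sound for this reading whenever [P] is closed under the
   context's expansion and packing rules.  In Γ the only constraint is
   c ∈ P → a ∈ P ∨ b ∈ P, so the sets {b}, {a,c} and {b,c} are all admissible: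
   {b,c} shows that every q with Γ ⊢ c <: a, q contains b or c, while {b} and
   {a,c} show that no qualifier containing b lies below c and no qualifier
   containing c lies below b.  Hence b and c are both minimal and incomparable;
   a principal difference q would give b <: q (minimality of b) and q <: c. *)

Definition meets (P : atom -> Prop) (q : qual) : Prop :=
  exists t, In t q /\ P t.

Record subq_model (G : ctx) (P : atom -> Prop) : Prop := {
  model_var : forall x T q, In (CVar x T q) G ->
    ~ In ADiamond q -> ~ In AHole q -> P (AVar x) -> meets P q;
  model_tvar : forall X T q, In (CTVar X T q) G ->
    ~ In ADiamond q -> ~ In AHole q -> P (AVar X) -> meets P q;
  model_self : forall f F q, In (CVar f F q) G -> is_fun_ty F ->
    meets P (qstrip q) -> P (AVar f)
}.

Lemma meets_qvar P x : meets P (qvar x) <-> P (AVar x).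
Proof.
  split.
  - intros [t [[<- | []] Pt]]; exact Pt.
  - intros Px; exists (AVar x); split; [left |]; auto.
Qed.

Lemma meets_qunion P p q : meets P (qunion p q) <-> meets P p \/ meets P q.
Proof.
  unfold meets, qunion; split.
  - intros [t [Ht Pt]]; apply in_app_or in Ht as [Ht | Ht]; eauto.
  - intros [[t [Ht Pt]] | [t [Ht Pt]]]; exists t; split; auto; apply in_or_app; auto.
Qed.

Lemma subq_meets G P p q : subq_model G P -> subq G p q -> meets P p -> meets P q.
Proof.
  intros HP Hpq; induction Hpq as
    [p q r _ IHpq _ IHqr | p q r s _ IHpq _ IHrs | p q Hsub
    | x T q Hx Hd Hh | X T q HX Hd Hh | f F q Hf HF]; intros Hp.
  - auto.
  - apply meets_qunion; apply meets_qunion in Hp; tauto.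
  - destruct Hp as [t [Ht Pt]]; exists t; auto.
  - apply meets_qvar in Hp; eapply model_var; eauto.
  - apply meets_qvar in Hp; eapply model_tvar; eauto.
  - apply meets_qvar; eapply model_self; eauto.
Qed.

Lemma not_subq_of_model G P p q :
  subq_model G P -> meets P p -> ~ meets P q -> ~ subq G p q.
Proof. intros HP Hp Hq Hpq; exact (Hq (subq_meets G P p q HP Hpq Hp)). Qed.

Lemma subq_qvar_of_In G x q : In (AVar x) q -> subq G (qvar x) q.
Proof. intros Hx; apply sq_sub; intros t [<- | []]; exact Hx. Qed.

Lemma no_principal_qual_diff_of_not_subq G p r q1 q2 :
  qual_diff G p r q1 -> qual_diff G p r q2 -> ~ subq G q1 q2 ->
  ~ exists q, principal_qual_diff G p r q.
Proof.
  intros diff1 diff2 Hn12 [q [[Hq _] below]].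
  apply Hn12, sq_trans with q.
  - apply (proj2 diff1); [exact Hq | exact (below q1 diff1)].
  - exact (below q2 diff2).
Qed.

Definition Gamma : ctx :=
  [CVar 0 (TRef TBase) [ADiamond];
   CVar 1 (TRef TBase) [ADiamond];
   CVar 2 (TRef TBase) [AVar 0; AVar 1]].

Lemma Gamma_model (P : atom -> Prop) :
  (P (AVar 2) -> P (AVar 0) \/ P (AVar 1)) -> subq_model Gamma P.
Proof.
  intros Hc; constructor.
  - intros x T q Hx Hd _ Px.
    destruct Hx as [E | [E | [E | []]]]; injection E as <- _ <-.
    + exfalso; apply Hd; left; reflexivity.
    + exfalso; apply Hd; left; reflexivity.
    + destruct (Hc Px) as [Pa | Pb].
      * exists (AVar 0); split; [left |]; auto.
      * exists (AVar 1); split; [right; left |]; auto.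
  - intros X T q HX; destruct HX as [E | [E | [E | []]]]; discriminate E.
  - intros f F q Hf HF.
    destruct Hf as [E | [E | [E | []]]]; injection E as <- <- _; contradiction.
Qed.

Lemma subq_Gamma_c_a_cases q :
  subq Gamma (qvar 2) (qunion (qvar 0) q) -> In (AVar 1) q \/ In (AVar 2) q.
Proof.
  pose (P := fun t => t = AVar 1 \/ t = AVar 2).
  intros Hc; apply (subq_meets Gamma P) in Hc.
  - apply meets_qunion in Hc as [Ha | [t [Ht [-> | ->]]]]; auto.
    apply meets_qvar in Ha as [E | E]; discriminate E.
  - apply Gamma_model; intros _; right; left; reflexivity.
  - apply meets_qvar; right; reflexivity.
Qed.

Lemma In_b_not_subq_Gamma_c q : In (AVar 1) q -> ~ subq Gamma q (qvar 2).
Proof.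
  intros Hb; apply not_subq_of_model with (P := fun t => t = AVar 1).
  - apply Gamma_model; intros E; discriminate E.
  - exists (AVar 1); auto.
  - rewrite meets_qvar; discriminate.
Qed.

Lemma In_c_not_subq_Gamma_b q : In (AVar 2) q -> ~ subq Gamma q (qvar 1).
Proof.
  intros Hc; apply not_subq_of_model with (P := fun t => t = AVar 0 \/ t = AVar 2).
  - apply Gamma_model; intros _; left; left; reflexivity.
  - exists (AVar 2); auto.
  - rewrite meets_qvar; intros [E | E]; discriminate E.
Qed.

Lemma qual_diff_Gamma_b : qual_diff Gamma (qvar 2) (qvar 0) (qvar 1).
Proof.
  split.
  - apply sq_var with (TRef TBase).
    + right; right; left; reflexivity.
    + intros [E | [E | []]]; discriminate E.
    + intros [E | [E | []]]; discriminate E.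
  - intros q Hq Hqb; destruct (subq_Gamma_c_a_cases q Hq) as [Hb | Hc].
    + apply subq_qvar_of_In; exact Hb.
    + exfalso; exact (In_c_not_subq_Gamma_b q Hc Hqb).
Qed.

Lemma qual_diff_Gamma_c : qual_diff Gamma (qvar 2) (qvar 0) (qvar 2).
Proof.
  split.
  - apply subq_qvar_of_In; right; left; reflexivity.
  - intros q Hq Hqc; destruct (subq_Gamma_c_a_cases q Hq) as [Hb | Hc].
    + exfalso; exact (In_b_not_subq_Gamma_c q Hb Hqc).
    + apply subq_qvar_of_In; exact Hc.
Qed.

Theorem mainTheorem1 :
  let a := 0 in let b := 1 in let c := 2 in
  let G : ctx := [CVar a (TRef TBase) [ADiamond];
                  CVar b (TRef TBase) [ADiamond];
                  CVar c (TRef TBase) [AVar a; AVar b]] in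
  qual_diff G (qvar c) (qvar a) (qvar b) /\
  qual_diff G (qvar c) (qvar a) (qvar c) /\
  ~ subq G (qvar b) (qvar c) /\
  ~ subq G (qvar c) (qvar b) /\
  ~ (exists q, principal_qual_diff G (qvar c) (qvar a) q).
Proof.
  cbv zeta; fold Gamma.
  assert (not_b_c : ~ subq Gamma (qvar 1) (qvar 2))
    by (apply In_b_not_subq_Gamma_c; left; reflexivity).
  assert (not_c_b : ~ subq Gamma (qvar 2) (qvar 1))
    by (apply In_c_not_subq_Gamma_b; left; reflexivity).
  split; [exact qual_diff_Gamma_b |].
  split; [exact qual_diff_Gamma_c |].
  split; [exact not_b_c |].
  split; [exact not_c_b |].
  exact (no_principal_qual_diff_of_not_subq _ _ _ _ _
           qual_diff_Gamma_b qual_diff_Gamma_c not_b_c).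
Qed.
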